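(* In a network satisfying (H1) and (H2), let $Y+S_0\rightleftarrows U_1\to Y+S_1\rightleftarrows\cdots\rightleftarrows U_L\to Y+S_L$ be a connected component with rate constants $a_j,b_j,c_j$ as in the context and $K_j:=b_j+c_j$. Then $a_L,b_L,c_L$ are identifiable from $s_L$ using the derivatives $\dot s_L,\ddot s_L$; and if $L>1$, the quantities $a_j$ and $K_j$, $1\le j\le L-1$, are identifiable from $s_L$ using $\dot s_L,\ddot s_L,s_L^{(3)}$.
   Context: Species are capital letters, concentrations lower-case letters. Mass-action system of a network with reactions $y\to y'$ and rates $k_{yy'}>0$ (vector $\mathbf{k}$): $\dot{\mathbf{x}}=\sum k_{yy'}\mathbf{x}^y(y'-y)$. Total derivative: $\dot\varphi=\sum_i\frac{\partial\varphi}{\partial x_i}\dot x_i$ with $\dot x_i$ replaced by the right-hand side; $\varphi^{(\ell)}$ its $\ell$-th iterate. A map $\psi$ of $\mathbf{k}$ is identifiable from $x$ using orders $1\le\ell\le D$ if, for positive $\mathbf{k}^*,\mathbf{k}^{**}$, equality $x^{(\ell)}(\mathbf{x},\mathbf{k}^* )=x^{(\ell)}(\mathbf{x},\mathbf{k}^{**})$ as polynomials in $\mathbf{x}$ for all $1\le\ell\le D$ implies $\psi(\mathbf{k}^* )=\psi(\mathbf{k}^{**})$. (H1) Every connected component has the form $Y+S_0\rightleftarrows U_1\to\cdots\rightleftarrows U_L\to Y+S_L$, i.e. reactions $Y+S_{j-1}\to U_j$ (rate $a_j$), $U_j\to Y+S_{j-1}$ (rate $b_j$), $U_j\to Y+S_j$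 (rate $c_j$); unique enzyme $Y$; intermediates distinct throughout the network; non-intermediates of a component pairwise distinct but may appear in other components; each complex in a unique component. $\mathscr{S}_U$ = substrates/products of the component of intermediate $U$. (H2) A partition $\mathscr{S}^{(0)}\sqcup\cdots\sqcup\mathscr{S}^{(M)}$ ($M\ge2$, nonempty, $\mathscr{S}^{(0)}$ the intermediates) with: for each intermediate $U$ with enzyme $Y$, some $\alpha\ge1$ has $\mathscr{S}_U\subseteq\mathscr{S}^{(\alpha)}$, $Y\notin\mathscr{S}^{(\alpha)}$. *)

From HB Require Import structures.
From mathcomp Require Import all_boot all_order all_algebra.
Set Implicit Arguments. Unset Strict Implicit. Unset Printing Implicit Defensive.
Import Order.TTheory GRing.Theory Num.Theory.
Local Open Scope ring_scope.

(* ---------- Multivariate polynomials over R in the species T ----------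
   A polynomial is a finite formal sum of terms (coefficient, monomial);
   a monomial is an exponent vector T -> nat.  Two such sums are equal
   "as polynomials" when every monomial has the same total coefficient. *)
Section MPoly.
Variables (R : realFieldType) (T : finType).

Definition mono := {ffun T -> nat}.
Definition mpoly := seq (R * mono).

Definition mcoef (p : mpoly) (m : mono) : R := \sum_(t <- p | t.2 == m) t.1.

Definition mpoly_eq (p q : mpoly) : Prop := forall m : mono, mcoef p m = mcoef q m.

Definition mvar (x : T) : mpoly := [:: (1, [ffun z => nat_of_bool (z == x)])].

Definition mmul (p q : mpoly) : mpoly :=
  [seq (t.1 * u.1, [ffun z => (t.2 z + u.2 z)%N]) | t : R * mono <- p, u : R * mono <- q].

Definition mderiv (x : T) (p : mpoly) : mpoly :=
  [seq (t.1 *+ t.2 x, [ffun z => (t.2 z - nat_of_bool (z == x))%N]) | t : R * mono <- p].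

Definition lie (F : T -> mpoly) (p : mpoly) : mpoly :=
  flatten [seq mmul (mderiv x p) (F x) | x <- enum T].

Definition lie_iter (F : T -> mpoly) (l : nat) (x : T) : mpoly := iter l (lie F) (mvar x).

(* Mass-action vector field of reactions (k, y, y'):  sum k x^y (y' - y). *)
Definition mass_action (rs : seq (R * mono * mono)) (z : T) : mpoly :=
  [seq (r.1.1 * ((r.2 z)%:R - (r.1.2 z)%:R), r.1.2) | r : R * mono * mono <- rs].

End MPoly.

Record ecomp (T : Type) := EComp { enz : T; subs : seq T; ints : seq T }.
(* component  Y + S_0 <-> U_1 -> Y + S_1 <-> ... <-> U_L -> Y + S_L,
   enz = Y, subs = [S_0; ...; S_L], ints = [U_1; ...; U_L]. *)

Section Network.
Variables (R : realFieldType) (T : finType).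

Definition cplx1 (U : T) : mono T := [ffun z => nat_of_bool (z == U)].
Definition cplx2 (Y S : T) : mono T := [ffun z => ((z == Y) + (z == S))%N].

Definition S_ (c : ecomp T) (j : nat) : T := nth (enz c) (subs c) j.
Definition U_ (c : ecomp T) (j : nat) : T := nth (enz c) (ints c) j.-1.

Definition comp_reactions (K : nat) (i : 'I_K) (C : ecomp T)
    (a b c : 'I_K -> nat -> R) : seq (R * mono T * mono T) :=
  flatten [seq [:: (a i j, cplx2 (enz C) (S_ C j.-1), cplx1 (U_ C j));
                   (b i j, cplx1 (U_ C j), cplx2 (enz C) (S_ C j.-1));
                   (c i j, cplx1 (U_ C j), cplx2 (enz C) (S_ C j))]
          | j <- iota 1 (size (ints C))].

Definition net_reactions (K : nat) (N : 'I_K -> ecomp T) (a b c : 'I_K -> nat -> R) :=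
  flatten [seq comp_reactions i (N i) a b c | i <- enum 'I_K].

Definition net_field (K : nat) (N : 'I_K -> ecomp T) (a b c : 'I_K -> nat -> R) : T -> mpoly R T :=
  mass_action (net_reactions N a b c).

Definition positive_rates (K : nat) (N : 'I_K -> ecomp T) (a b c : 'I_K -> nat -> R) : Prop :=
  forall (i : 'I_K) (j : nat), (1 <= j <= size (ints (N i)))%N ->
    0 < a i j /\ 0 < b i j /\ 0 < c i j.
End Network.

Section Hyp.
Variables (T : finType).

Definition is_intermediate (K : nat) (N : 'I_K -> ecomp T) (z : T) : Prop :=
  exists i : 'I_K, z \in ints (N i).

Definition is_nonintermediate (K : nat) (N : 'I_K -> ecomp T) (z : T) : Prop :=
  exists i : 'I_K, z = enz (N i) \/ z \in subs (N i).

Definition H1 (K : nat) (N : 'I_K -> ecomp T) : Prop :=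
  [/\
      (forall i, (0 < size (ints (N i)))%N /\ size (subs (N i)) = (size (ints (N i))).+1),
      uniq (flatten [seq ints (N i) | i <- enum 'I_K]),
      (forall z, is_intermediate N z -> ~ is_nonintermediate N z),
       (forall i, uniq (cons (enz (N i)) (subs (N i)))) /\
       (forall i i' : 'I_K, i != i' -> forall S S', S \in subs (N i) -> S' \in subs (N i') ->
         cplx2 (enz (N i)) S != cplx2 (enz (N i')) S')
    &
      (forall z, is_intermediate N z \/ is_nonintermediate N z)].

(* (H2), partition given by the class map part : T -> {0..M} *)
Definition H2 (K : nat) (N : 'I_K -> ecomp T) (part : T -> nat) (M : nat) : Prop :=
  [/\ (2 <= M)%N,
      (forall z, (part z <= M)%N),
      (forall alpha, (alpha <= M)%N -> exists z, part z = alpha),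
      (forall z, part z = 0%N <-> is_intermediate N z)
    & (forall i : 'I_K, exists alpha, (1 <= alpha)%N /\
        (forall S, S \in subs (N i) -> part S = alpha) /\ part (enz (N i)) <> alpha)].
End Hyp.

(* Strategy: compute exactly a few coefficients of the iterated total derivatives
   of s_L.  Along a mass-action field the coefficient of x^m in the derivative of
   a polynomial is a sum, over the reactions k : x^y -> x^y', of independent
   contributions (mcoef_lie, contrib_monom).  Under (H1)-(H2) a single reaction
   step contributes at each monomial we inspect, which gives
     order 1 : c_L at U_L,
     order 2 : a_L c_L at Y S_(L-1)  and  -(b_L + c_L) c_L at U_L,
     order 3 : K_j a_L c_L at U_j S_(L-1)  and  -a_j a_L c_L at Y S_(j-1) S_(L-1).
   As c_L and a_L are positive, these values determine the rates. *)

From HB Require Import structures.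
From mathcomp Require Import all_boot all_order all_algebra.
From mathcomp Require Import zify ring.
Import Order.TTheory GRing.Theory Num.Theory.
Set Implicit Arguments. Unset Strict Implicit. Unset Printing Implicit Defensive.
Local Open Scope ring_scope.

Section SmallPermutations.
Variable (V : eqType).

Lemma perm_single (u v : V) : perm_eq [:: u] [:: v] = (u == v).
Proof.
by apply/idP/eqP => [/(@perm_small_eq _ _ [:: v] isT) [] | ->].
Qed.

Lemma perm_pair_single (u v w : V) : perm_eq [:: u; v] [:: w] = false.
Proof. by apply/negP => /perm_size. Qed.

Lemma perm_single_pair (u v w : V) : perm_eq [:: w] [:: u; v] = false.
Proof. by apply/negP => /perm_size. Qed.

Lemma perm_swap2 (u v : V) : perm_eq [:: u; v] [:: v; u].
Proof. by rewrite -[[:: u; v]]/([:: u] ++ [:: v]) (perm_catC [:: u] [:: v]). Qed.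

Lemma perm_pair (u v u' v' : V) : perm_eq [:: u; v] [:: u'; v'] ->
  (u = u' /\ v = v') \/ (u = v' /\ v = u').
Proof.
move=> Ep; have : u \in [:: u'; v'] by rewrite -(perm_mem Ep) mem_head.
rewrite !inE => /orP [] /eqP Eu; subst u.
  by left; split => //; apply/eqP; rewrite -perm_single -(perm_cons u').
right; split => //; apply/eqP; rewrite -perm_single -(perm_cons v').
exact: perm_trans Ep (perm_swap2 _ _).
Qed.

End SmallPermutations.

Section FlattenUniq.
Variables (I V : eqType) (f : I -> seq V) (s : seq I).
Hypothesis uniq_fs : uniq (flatten (map f s)).

Lemma uniq_flatten_map_disj (x y : I) (z : V) :
  x \in s -> y \in s -> z \in f x -> z \in f y -> x = y.
Proof.
elim: s uniq_fs => //= w s' IH; rewrite cat_uniq => /and3P [_ disj uniq_s'].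
rewrite !inE => /predU1P [->|xs] /predU1P [->|ys] zx zy //.
- by case/negP: disj; apply/hasP; exists z => //; apply/flatten_mapP; exists y.
- by case/negP: disj; apply/hasP; exists z => //; apply/flatten_mapP; exists x.
- exact: IH.
Qed.

Lemma uniq_flatten_map_each (x : I) : x \in s -> uniq (f x).
Proof.
elim: s uniq_fs => //= w s' IH; rewrite cat_uniq => /and3P [uniq_w _ uniq_s'].
by rewrite inE => /predU1P [->|xs] //; apply: IH.
Qed.

End FlattenUniq.

Section LieCoefficients.
Variables (R : realFieldType) (T : finType).

Definition monom (s : seq T) : mono T := [ffun z => count_mem z s].

Definition mono_le (y m : mono T) : bool := [forall z, (y z <= m z)%N].

(* The exponent [m - y + e_x]: the monomials of [phi] that, differentiated in
   [x] and multiplied by [x^y], contribute to the monomial [x^m]. *)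
Definition shift_mono (m y : mono T) (x : T) : mono T :=
  [ffun z => (m z - y z + (z == x))%N].

(* Contribution of the reaction [r = (k, y, y')] to the coefficient of [x^m]
   in the total derivative of a polynomial with coefficient function [f]:
   [sum_x k (y'_x - y_x) (m - y)_x.+1 f(m - y + e_x)] when [x^y] divides [x^m]. *)
Definition contrib (f : mono T -> R) (m : mono T) (r : R * mono T * mono T) : R :=
  if mono_le r.1.2 m then
    \sum_(x <- enum T) r.1.1 * ((r.2 x)%:R - (r.1.2 x)%:R)
      * ((m x - r.1.2 x).+1)%:R * f (shift_mono m r.1.2 x)
  else 0.

(* Monomial bookkeeping for one term [t] of [phi]: [d/dx x^t * x^y] has
   exponent [m] exactly when [t = m - y + e_x], and then [t_x = (m - y)_x + 1]. *)
Lemma deriv_term_match (t y m : mono T) (x : T) :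
  (if [ffun z => ([ffun z0 => t z0 - (z0 == x)] z + y z)%N] == m
   then t x else 0)%N =
  (if mono_le y m && (t == shift_mono m y x) then (m x - y x).+1 else 0)%N.
Proof.
have -> : [ffun z => ([ffun z0 => t z0 - (z0 == x)] z + y z)%N] =
          [ffun z => (t z - (z == x) + y z)%N] by apply/ffunP => z; rewrite !ffunE.
have [t_x0|t_xpos] := posnP (t x).
  rewrite t_x0 if_same; case: ifP => // /andP [_ /eqP Et].
  by move: t_x0; rewrite Et ffunE eqxx addn1.
have -> : ([ffun z => (t z - (z == x) + y z)%N] == m) =
          mono_le y m && (t == shift_mono m y x).
  apply/idP/idP => [/eqP/ffunP Em | /andP [/forallP le_ym /eqP ->]].
    apply/andP; split.
      by apply/forallP => z; move: (Em z); rewrite ffunE => <-; lia.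
    apply/eqP/ffunP => z; move: (Em z); rewrite !ffunE => <-.
    by case: (eqVneq z x) => [->|_] /=; lia.
  apply/eqP/ffunP => z; rewrite /shift_mono !ffunE.
  by move: (le_ym z); move: (m z) (y z) => mz yz; case: (z == x); lia.
by case: ifP => // /andP [_ /eqP ->]; rewrite ffunE eqxx addn1.
Qed.

Lemma mcoef_lie (rs : seq (R * mono T * mono T)) (p : mpoly R T) (m : mono T) :
  mcoef (lie (mass_action rs) p) m = \sum_(r <- rs) contrib (mcoef p) m r.
Proof.
rewrite /mcoef /lie big_flatten /= big_map.
under eq_bigr => x _ do rewrite big_mkcond /mmul big_allpairs_dep /=.
under eq_bigr => x _ do rewrite /mderiv big_map /mass_action /=;
  under eq_bigr => x _ do under eq_bigr => t _ do rewrite big_map /=.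
rewrite exchange_big /=.
under eq_bigr => t _ do rewrite exchange_big /=.
rewrite exchange_big /=; apply: eq_bigr => r _; rewrite /contrib.
case: ifP => le_ym.
  rewrite exchange_big /=; apply: eq_bigr => x _.
  rewrite big_distrr /= [RHS]big_mkcond /=; apply: eq_bigr => t _.
  move: (deriv_term_match t.2 r.1.2 m x); rewrite le_ym /=.
  case: ifP => _; case: ifP => _ Et //.
  - by rewrite Et -mulr_natr; ring.
  - by rewrite Et mulr0n mul0r.
rewrite big1 // => t _; rewrite big1 // => x _.
move: (deriv_term_match t.2 r.1.2 m x); rewrite le_ym /=; case: ifP => // _ ->.
by rewrite mulr0n mul0r.
Qed.

Lemma sum_enum_pred1 (F : T -> R) (y : T) :
  \sum_(x <- enum T) (if x == y then F x else 0) = F y.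
Proof. by rewrite big_enum /= -big_mkcond /= big_pred1_eq. Qed.

Lemma sum_count_mem (t : seq T) (h : T -> R) :
  \sum_(x <- enum T) (count_mem x t)%:R * h x = \sum_(z <- t) h z.
Proof.
elim: t => [|z t IH] /=; first by rewrite big_nil big1 // => x _; rewrite mul0r.
rewrite big_cons -IH; under eq_bigr => x _ do rewrite natrD mulrDl.
rewrite big_split /=; congr (_ + _).
rewrite -(sum_enum_pred1 h z); apply: eq_bigr => x _; rewrite eq_sym.
by case: (x == z); rewrite ?mul1r ?mul0r.
Qed.

Lemma monomE (s : seq T) (z : T) : monom s z = count_mem z s.
Proof. by rewrite ffunE. Qed.

Lemma monom_perm (s t : seq T) : perm_eq s t -> monom s = monom t.
Proof. by move/permP => Est; apply/ffunP => z; rewrite !ffunE Est. Qed.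

Lemma monom_eqE (s t : seq T) : (monom s == monom t) = perm_eq s t.
Proof.
apply/eqP/idP => [/ffunP Est | /monom_perm //].
by apply/allP => z _; apply/eqP; move: (Est z); rewrite !ffunE.
Qed.

Lemma mono_le_mem (s t : seq T) : mono_le (monom t) (monom s) -> {subset t <= s}.
Proof.
move/forallP => le_ts z; move: (le_ts z); rewrite !ffunE => le_z.
rewrite -!has_pred1 !has_count => /leq_trans; exact.
Qed.

Lemma mono_le_cat (s t u : seq T) : perm_eq s (t ++ u) -> mono_le (monom t) (monom s).
Proof.
move/permP => Es; apply/forallP => z.
by rewrite !ffunE (Es (pred1 z)) count_cat leq_addr.
Qed.

Lemma contrib_out (f : mono T -> R) (m : mono T) r :
  ~~ mono_le r.1.2 m -> contrib f m r = 0.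
Proof. by rewrite /contrib => /negbTE ->. Qed.

Lemma contrib_monom (f : mono T -> R) (s t t' u : seq T) (k : R) :
  perm_eq s (t ++ u) ->
  contrib f (monom s) (k, monom t, monom t') =
  k * (\sum_(z <- t') ((count_mem z u).+1%:R * f (monom (z :: u)))
     - \sum_(z <- t) ((count_mem z u).+1%:R * f (monom (z :: u)))).
Proof.
move=> Es; rewrite /contrib (mono_le_cat Es) /=.
have Ecount x : (monom s x - monom t x)%N = count_mem x u.
  by move/permP: Es => Es; rewrite !ffunE (Es (pred1 x)) count_cat addKn.
have Eshift x : shift_mono (monom s) (monom t) x = monom (x :: u).
  apply/ffunP => z; move: (Ecount z); rewrite /shift_mono !ffunE => ->.
  by rewrite /= addnC eq_sym.
rewrite -(sum_count_mem t') -(sum_count_mem t) -sumrB big_distrr /=.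
by apply: eq_bigr => x _; rewrite Ecount Eshift !monomE; ring.
Qed.

Lemma mcoef_mvar (x : T) (m : mono T) :
  mcoef (mvar R x) m = if monom [:: x] == m then 1 else 0.
Proof.
rewrite /mcoef /mvar big_mkcond big_cons big_nil /= addr0.
have -> : [ffun z => nat_of_bool (z == x)] = monom [:: x].
  by apply/ffunP => z; rewrite !ffunE /= addn0 eq_sym.
by [].
Qed.

Lemma shift_mono_single (m y : mono T) (x z : T) : mono_le y m ->
  (shift_mono m y x == monom [:: z]) = (y == m) && (x == z).
Proof.
move=> /forallP le_ym; apply/eqP/andP => [/ffunP Es | [/eqP <- /eqP <-]].
  have Ex := Es x; rewrite !ffunE /= eqxx addn0 in Ex.
  have Ezx : z = x by move: Ex; case: eqP => //= _; lia.
  subst z; split => //; apply/eqP/ffunP => w; move: (Es w) (le_ym w).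
  by rewrite !ffunE /= addn0 eq_sym; case: (w == x) => /=; lia.
by apply/ffunP => w; rewrite !ffunE /= addn0 subnn eq_sym.
Qed.

Lemma contrib_mvar (x : T) (m : mono T) r :
  contrib (mcoef (mvar R x)) m r =
  if r.1.2 == m then r.1.1 * ((r.2 x)%:R - (r.1.2 x)%:R) else 0.
Proof.
rewrite /contrib; case: ifP => le_ym.
  under eq_bigr => z _ do rewrite mcoef_mvar eq_sym shift_mono_single //.
  case: eqP => [<-|_]; last by rewrite big1 // => z _; rewrite /= mulr0.
  rewrite -[RHS](sum_enum_pred1 (fun z => r.1.1 * ((r.2 z)%:R - (r.1.2 z)%:R)) x).
  apply: eq_bigr => z _ /=; rewrite subnn mulr1.
  by case: (z == x); rewrite ?mulr1 ?mulr0.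
case: eqP => // Em; move: le_ym; rewrite Em.
by have -> : mono_le m m by apply/forallP.
Qed.

Lemma mono_le_single (s : seq T) (w : T) : mono_le (monom [:: w]) (monom s) -> w \in s.
Proof. by move/mono_le_mem; apply; rewrite mem_head. Qed.

Lemma mono_le_pair (s : seq T) (v w : T) :
  mono_le (monom [:: v; w]) (monom s) -> v \in s /\ w \in s.
Proof. by move/mono_le_mem => le_s; rewrite !le_s ?inE ?eqxx ?orbT. Qed.

Lemma contrib_single_out (f : mono T -> R) (s : seq T) (w : T) (k : R) (y' : mono T) :
  w \notin s -> contrib f (monom s) (k, monom [:: w], y') = 0.
Proof. by move=> w_s; apply: contrib_out; apply: contraNN w_s => /mono_le_single. Qed.

Lemma mono_le_two (u1 u2 v w : T) : u1 != u2 ->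
  mono_le (monom [:: u1; u2]) (monom [:: v; w]) -> perm_eq [:: u1; u2] [:: v; w].
Proof.
move=> ne_u /mono_le_pair []; rewrite !inE => /orP [] /eqP E1 /orP [] /eqP E2;
  move: ne_u; rewrite E1 E2 ?eqxx // => _.
exact: perm_swap2.
Qed.

End LieCoefficients.

Lemma cplx1E (T : finType) (U : T) : cplx1 U = monom [:: U].
Proof. by apply/ffunP => z; rewrite !ffunE /= addn0 eq_sym. Qed.

Lemma cplx2E (T : finType) (Y S : T) : cplx2 Y S = monom [:: Y; S].
Proof. by apply/ffunP => z; rewrite !ffunE /= addn0 ![_ == z]eq_sym. Qed.

Section NetworkSums.
Variables (R : realFieldType) (T : finType) (K : nat) (N : 'I_K -> ecomp T).

Lemma mem_iota1 j n : j \in iota 1 n -> (1 <= j <= n)%N.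
Proof. by rewrite mem_iota; lia. Qed.

Lemma network_sum_single (g : 'I_K -> nat -> R) (i1 : 'I_K) j1 v :
  (1 <= j1 <= size (ints (N i1)))%N ->
  (forall i j, (1 <= j <= size (ints (N i)))%N ->
     g i j = if (i == i1) && (j == j1) then v else 0) ->
  \sum_(i <- enum 'I_K) \sum_(j <- iota 1 (size (ints (N i)))) g i j = v.
Proof.
move=> hj1 Eg; rewrite (bigD1_seq i1) ?mem_enum ?enum_uniq //=.
rewrite [X in _ + X]big1_seq ?addr0; last first.
  move=> i /andP [ne_i _]; rewrite big1_seq // => j /andP [_ /mem_iota1 hj].
  by rewrite Eg // (negbTE ne_i).
rewrite (bigD1_seq j1) ?iota_uniq ?mem_iota ?addn1 //=.
rewrite Eg ?eqxx // [X in _ + X]big1_seq ?addr0 // => j /andP [ne_j /mem_iota1 hj].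
by rewrite Eg // (negbTE ne_j) andbF.
Qed.

Lemma network_sum_zero (g : 'I_K -> nat -> R) :
  (forall i j, (1 <= j <= size (ints (N i)))%N -> g i j = 0) ->
  \sum_(i <- enum 'I_K) \sum_(j <- iota 1 (size (ints (N i)))) g i j = 0.
Proof.
move=> Eg; rewrite big1 // => i _; rewrite big1_seq // => j /andP [_ /mem_iota1 hj].
exact: Eg.
Qed.

End NetworkSums.

Section Network.
Variables (T : finType) (K : nat) (N : 'I_K -> ecomp T) (part : T -> nat) (M : nat).
Hypotheses (h1 : H1 N) (h2 : H2 N part M).

Lemma ints_pos i : (0 < size (ints (N i)))%N.
Proof. by case: h1 => /(_ i) []. Qed.

Lemma U_in_ints i j : (1 <= j <= size (ints (N i)))%N -> U_ (N i) j \in ints (N i).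
Proof. by case: j => // j /andP [_ lt_j]; rewrite /U_ mem_nth. Qed.

Lemma S_in_subs i k : (k <= size (ints (N i)))%N -> S_ (N i) k \in subs (N i).
Proof. by case: h1 => /(_ i) [_ size_subs] _ _ _ _ le_k; rewrite /S_ mem_nth ?size_subs. Qed.

Lemma S_pred_in_subs i j : (1 <= j <= size (ints (N i)))%N -> S_ (N i) j.-1 \in subs (N i).
Proof. by move=> /andP [_ le_j]; apply: S_in_subs; rewrite (leq_trans (leq_pred j)). Qed.

Lemma enz_nonint i : is_nonintermediate N (enz (N i)).
Proof. by exists i; left. Qed.

Lemma S_nonint i k : (k <= size (ints (N i)))%N -> is_nonintermediate N (S_ (N i) k).
Proof. by move=> le_k; exists i; right; apply: S_in_subs. Qed.

Lemma U_neq_nonint i j w : (1 <= j <= size (ints (N i)))%N ->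
  is_nonintermediate N w -> (U_ (N i) j == w) = false.
Proof.
move=> hj w_nonint; apply/eqP => Ew; case: h1 => _ _ int_nonint _ _.
by apply: (int_nonint (U_ (N i) j)); [exists i; apply: U_in_ints | rewrite Ew].
Qed.

Lemma nonint_neq_U i j w : (1 <= j <= size (ints (N i)))%N ->
  is_nonintermediate N w -> (w == U_ (N i) j) = false.
Proof. by move=> hj w_nonint; rewrite eq_sym U_neq_nonint. Qed.

Lemma U_eqE i j i' j' :
  (1 <= j <= size (ints (N i)))%N -> (1 <= j' <= size (ints (N i')))%N ->
  (U_ (N i) j == U_ (N i') j') = (i == i') && (j == j').
Proof.
move=> hj hj'; apply/eqP/andP => [EU | [/eqP -> /eqP ->] //].
case: h1 => _ uniq_ints _ _ _.
have Ei : i = i'.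
  apply: (uniq_flatten_map_disj uniq_ints (mem_enum _ i) (mem_enum _ i') (U_in_ints hj)).
  by rewrite EU; apply: U_in_ints.
subst i'; split => //.
have uniq_i := uniq_flatten_map_each uniq_ints (mem_enum _ i).
move: hj hj' EU; rewrite /U_; case: j => // j; case: j' => // j' /andP [_ lt_j] /andP [_ lt_j'].
by move/eqP; rewrite nth_uniq // => /eqP /= ->.
Qed.

Lemma enz_notin_subs i : enz (N i) \notin subs (N i).
Proof. by case: h1 => _ _ _ [uniq_comp _] _; case/andP: (uniq_comp i). Qed.

Lemma enz_eq_S i k : (k <= size (ints (N i)))%N -> (enz (N i) == S_ (N i) k) = false.
Proof.
by move=> le_k; apply/negbTE/eqP => ES; move: (enz_notin_subs i); rewrite ES S_in_subs.
Qed.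

Lemma S_eq_enz i k : (k <= size (ints (N i)))%N -> (S_ (N i) k == enz (N i)) = false.
Proof. by move=> le_k; rewrite eq_sym enz_eq_S. Qed.

Lemma S_eqE i k k' : (k <= size (ints (N i)))%N -> (k' <= size (ints (N i)))%N ->
  (S_ (N i) k == S_ (N i) k') = (k == k').
Proof.
case: h1 => /(_ i) [_ size_subs] _ _ [uniq_comp _] _ le_k le_k'.
case/andP: (uniq_comp i) => _ uniq_subs.
by rewrite /S_ nth_uniq ?size_subs.
Qed.

(* (H2): the enzyme of a component lies in another class than its substrates,
   so an enzyme and a substrate of one component are never both substrates of
   a common component. *)
Lemma no_enz_with_sub i i' S' : S' \in subs (N i') ->
  enz (N i') \in subs (N i) -> S' \in subs (N i) -> False.
Proof.
case: h2 => _ _ _ _ classes S'_i' enz_i S'_i.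
case: (classes i) => al [_ [class_i _]]; case: (classes i') => al' [_ [class_i' enz_class]].
by apply: enz_class; rewrite -(class_i' _ S'_i') (class_i _ enz_i) (class_i _ S'_i).
Qed.

Lemma source_component i j i' : (1 <= j <= size (ints (N i)))%N ->
  enz (N i) \in enz (N i') :: subs (N i') ->
  S_ (N i) j.-1 \in enz (N i') :: subs (N i') -> i = i'.
Proof.
move=> hj; have S_i := S_pred_in_subs hj.
case: h1 => _ _ _ [_ cplx_distinct] _.
case: (eqVneq i i') => // ne_ii'; rewrite !inE.
case/predU1P => [E_enz | enz_i'] /predU1P [E_S | S_i'].
- by move: (enz_notin_subs i); rewrite E_enz -E_S S_i.
- by move: (cplx_distinct i i' ne_ii' _ _ S_i S_i'); rewrite E_enz eqxx.
- move: (cplx_distinct i i' ne_ii' _ _ S_i enz_i'); rewrite E_S !cplx2E.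
  by rewrite (monom_perm (perm_swap2 (enz (N i)) (enz (N i')))) eqxx.
- by case: (no_enz_with_sub S_i enz_i' S_i').
Qed.

Lemma mem_enz_S i x (ks : seq nat) : all (fun k => k <= size (ints (N i)))%N ks ->
  x \in enz (N i) :: map (S_ (N i)) ks -> x \in enz (N i) :: subs (N i).
Proof.
move=> /allP le_ks; rewrite !inE => /predU1P [->|]; first by rewrite eqxx.
by case/mapP => k k_in ->; rewrite S_in_subs ?orbT ?le_ks.
Qed.

Lemma U_not_nonint i j : (1 <= j <= size (ints (N i)))%N -> ~ is_nonintermediate N (U_ (N i) j).
Proof. by move=> hj /(U_neq_nonint hj); rewrite eqxx. Qed.

Lemma source_le_pair i j v w : (1 <= j <= size (ints (N i)))%N ->
  mono_le (monom [:: enz (N i); S_ (N i) j.-1]) (monom [:: v; w]) ->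
  is_nonintermediate N v /\ is_nonintermediate N w.
Proof.
move=> hj; have le_pj : (j.-1 <= size (ints (N i)))%N.
  by rewrite (leq_trans (leq_pred j)) //; case/andP: hj.
have [enz_ni S_ni] := (enz_nonint i, S_nonint le_pj).
by move/mono_le_two; rewrite enz_eq_S // => /(_ isT) /perm_pair [[<- <-]|[<- <-]].
Qed.

Variable (i0 : 'I_K).

Local Notation L := (size (ints (N i0))).
Local Notation Y := (enz (N i0)).
Local Notation S := (S_ (N i0)).
Local Notation U := (U_ (N i0)).

Lemma source_in_comp i j (ks : seq nat) : (1 <= j <= size (ints (N i)))%N ->
  all (fun k => k <= L)%N ks ->
  mono_le (monom [:: enz (N i); S_ (N i) j.-1]) (monom (Y :: map S ks)) ->
  i = i0 /\ j.-1 \in ks.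
Proof.
move=> hj le_ks /mono_le_pair [enz_in S_in].
have Ei : i = i0 by apply: (source_component hj); apply: (mem_enz_S le_ks).
subst i; split => //.
have le_pj : (j.-1 <= L)%N by rewrite (leq_trans (leq_pred j)) //; case/andP: hj.
move: S_in; rewrite inE S_eq_enz //= => /mapP [k k_in /eqP].
by rewrite S_eqE ?(allP le_ks k k_in) // => /eqP ->.
Qed.

Section Coefficients.
Variables (R : realFieldType) (a b c : 'I_K -> nat -> R).

Definition dcoef (l : nat) : mono T -> R :=
  mcoef (lie_iter (net_field N a b c) l (S L)).

Definition step_contrib (f : mono T -> R) (m : mono T) (i : 'I_K) (j : nat) : R :=
  contrib f m (a i j, monom [:: enz (N i); S_ (N i) j.-1], monom [:: U_ (N i) j]) +
  contrib f m (b i j, monom [:: U_ (N i) j], monom [:: enz (N i); S_ (N i) j.-1]) +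
  contrib f m (c i j, monom [:: U_ (N i) j], monom [:: enz (N i); S_ (N i) j]).

Lemma dcoef_succ l m : dcoef l.+1 m =
  \sum_(i <- enum 'I_K) \sum_(j <- iota 1 (size (ints (N i)))) step_contrib (dcoef l) m i j.
Proof.
rewrite /dcoef /lie_iter iterS /net_field mcoef_lie /net_reactions big_flatten big_map.
apply: eq_bigr => i _; rewrite /comp_reactions big_flatten big_map.
by apply: eq_bigr => j _; rewrite !big_cons big_nil /= addr0 !cplx1E !cplx2E addrA.
Qed.

Lemma dcoef0 : dcoef 0 = mcoef (mvar R (S L)).
Proof. by []. Qed.

Lemma lt_pred_L j : (1 <= j <= L)%N -> (j.-1 < L)%N.
Proof. by case: j => // j /andP []. Qed.

(* [s_L] is only produced by [U_L -> Y + S_L], so [U_L] is the only intermediate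
   in [ds_L/dt]. *)
Lemma dcoef1_U j : (1 <= j <= L)%N ->
  dcoef 1 (monom [:: U j]) = if j == L then c i0 L else 0.
Proof.
move=> hj; have lt_pj := lt_pred_L hj; have le_jL : (j <= L)%N by case/andP: hj.
rewrite dcoef_succ (network_sum_single (i1 := i0) (j1 := j)
  (v := if j == L then c i0 L else 0)) // => i j' hj'.
rewrite /step_contrib dcoef0 !contrib_mvar /= !monom_eqE perm_pair_single perm_single.
rewrite U_eqE //; case: andP => [[/eqP -> /eqP ->]|_] /=; last by rewrite !addr0.
rewrite !monomE /= (enz_eq_S (leqnn L)) (S_eqE (ltnW lt_pj) (leqnn L)) (S_eqE le_jL (leqnn L)).
rewrite (ltn_eqF lt_pj) (U_neq_nonint hj (S_nonint (leqnn L))).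
by case: eqP => [->|_]; rewrite /= !subr0 ?mulr0 ?mulr1 ?add0r ?addr0.
Qed.

Lemma dcoef1_nonint w : is_nonintermediate N w -> dcoef 1 (monom [:: w]) = 0.
Proof.
move=> w_nonint; rewrite dcoef_succ network_sum_zero // => i j hj.
rewrite /step_contrib dcoef0 !contrib_mvar /= !monom_eqE perm_pair_single perm_single.
by rewrite (U_neq_nonint hj w_nonint) /= !addr0.
Qed.

(* Monomials [S_p x] with [p < L] do not occur in [ds_L/dt]: the degree-two
   complexes [Y' + S'] containing [S_p] never contain [S_L] as well (H2). *)
Lemma dcoef1_S p x : (p < L)%N -> dcoef 1 (monom [:: S p; x]) = 0.
Proof.
move=> lt_pL; rewrite dcoef_succ network_sum_zero // => i j hj.
rewrite /step_contrib dcoef0 !contrib_mvar /= !monom_eqE !perm_single_pair /= !addr0.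
case: ifP => // Eperm; rewrite (monom_perm Eperm) !monomE /=.
rewrite (U_neq_nonint hj (S_nonint (leqnn L))) S_eqE ?(ltnW lt_pL) // (ltn_eqF lt_pL).
case: (eqVneq x (S L)) => [Ex|ne_x]; last by rewrite /= subrr mulr0.
exfalso; subst x; have S_i := S_pred_in_subs hj.
have [S_p S_L] : S p \in subs (N i0) /\ S L \in subs (N i0).
  by rewrite !S_in_subs ?(ltnW lt_pL).
by case/perm_pair: Eperm => [[E1 E2]|[E1 E2]];
  apply: (no_enz_with_sub (i := i0) S_i); rewrite ?E1 ?E2.
Qed.

Lemma dcoef1_S' p w : (p < L)%N -> dcoef 1 (monom [:: w; S p]) = 0.
Proof. by move=> lt_pL; rewrite (monom_perm (perm_swap2 w (S p))) dcoef1_S. Qed.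

(* Only the binding reaction [Y + S_k -> U_(k+1)] consumes the complex [Y + S_k]. *)
Lemma dcoef2_YS k : (k < L)%N ->
  dcoef 2 (monom [:: Y; S k]) = a i0 k.+1 * dcoef 1 (monom [:: U k.+1]).
Proof.
move=> lt_kL; have le_kL := ltnW lt_kL.
rewrite dcoef_succ (network_sum_single (i1 := i0) (j1 := k.+1)
  (v := a i0 k.+1 * dcoef 1 (monom [:: U k.+1]))) // => i j hj.
have U_out : U_ (N i) j \notin [:: Y; S k].
  by rewrite !inE (U_neq_nonint hj (enz_nonint i0)) (U_neq_nonint hj (S_nonint le_kL)).
rewrite /step_contrib !contrib_single_out // !addr0.
have [le_src|not_le] := boolP (mono_le (monom [:: enz (N i); S_ (N i) j.-1]) (monom [:: Y; S k])).
  have le_ks : all (fun k' => k' <= L)%N [:: k] by rewrite /= le_kL.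
  have [Ei] := source_in_comp hj le_ks le_src; subst i.
  rewrite inE => /eqP Ej; have {}Ej : j = k.+1 by move: hj Ej; case: (j) => // j' _ /= ->.
  subst j.
  rewrite !eqxx (contrib_monom _ _ (u := [::])) ?cats0 // !big_cons !big_nil /=.
  by rewrite (dcoef1_nonint (enz_nonint i0)) (dcoef1_nonint (S_nonint le_kL)); ring.
rewrite contrib_out //; case: andP => // [[/eqP Ei /eqP Ej]]; subst i j.
by case/negP: not_le; apply: (mono_le_cat (u := [::])); rewrite cats0.
Qed.

Lemma dcoef2_YS_last : dcoef 2 (monom [:: Y; S L.-1]) = a i0 L * c i0 L.
Proof.
have hL : (1 <= L <= L)%N by rewrite leqnn andbT ints_pos.
by rewrite dcoef2_YS ?prednK ?ints_pos // (dcoef1_U hL) eqxx.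
Qed.

Lemma dcoef2_YS_inner j : (1 <= j)%N -> (j < L)%N -> dcoef 2 (monom [:: Y; S j.-1]) = 0.
Proof.
move=> hj1 lt_jL; have hj : (1 <= j <= L)%N by rewrite hj1 ltnW.
by rewrite dcoef2_YS ?lt_pred_L // prednK // dcoef1_U // (ltn_eqF lt_jL) mulr0.
Qed.

(* [U_L] is consumed by [U_L -> Y + S_(L-1)] and [U_L -> Y + S_L]. *)
Lemma dcoef2_U : dcoef 2 (monom [:: U L]) = - (b i0 L + c i0 L) * c i0 L.
Proof.
have hL : (1 <= L <= L)%N by rewrite leqnn andbT ints_pos.
rewrite dcoef_succ (network_sum_single (i1 := i0) (j1 := L)
  (v := - (b i0 L + c i0 L) * c i0 L)) // => i j hj.
rewrite /step_contrib contrib_out ?add0r; last first.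
  by apply/negP => /mono_le_pair []; rewrite inE (nonint_neq_U hL (enz_nonint i)).
have [/andP [/eqP Ei /eqP Ej] | ne_ij] := boolP ((i == i0) && (j == L)); last first.
  by rewrite !contrib_single_out ?addr0 // inE U_eqE.
subst i j; rewrite !(contrib_monom _ _ (u := [::])) ?cats0 // !big_cons !big_nil /=.
rewrite (dcoef1_nonint (enz_nonint i0)) (dcoef1_nonint (S_nonint (leq_pred L))).
by rewrite (dcoef1_nonint (S_nonint (leqnn L))) (dcoef1_U hL) eqxx; ring.
Qed.

Lemma dcoef2_SU p i' j' : (p < L)%N -> (1 <= j' <= size (ints (N i')))%N ->
  dcoef 2 (monom [:: S p; U_ (N i') j']) = 0.
Proof.
move=> lt_pL hj'; rewrite dcoef_succ network_sum_zero // => i j hj.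
rewrite /step_contrib contrib_out ?add0r; last first.
  by apply/negP => /(source_le_pair hj) [_ /(U_not_nonint hj')].
have vanish k (y' : seq T) :
    contrib (dcoef 1) (monom [:: S p; U_ (N i') j']) (k, monom [:: U_ (N i) j], monom y') = 0.
  have [U_in|U_out] := boolP (U_ (N i) j \in [:: S p; U_ (N i') j']);
    last exact: contrib_single_out.
  move: U_in; rewrite !inE (U_neq_nonint hj (S_nonint (ltnW lt_pL))) /= => /eqP EU.
  rewrite (contrib_monom _ _ (u := [:: S p])); last by rewrite EU; exact: perm_swap2.
  by rewrite !big1 ?subrr ?mulr0 // => z _; rewrite dcoef1_S' ?mulr0.
by rewrite !vanish addr0.
Qed.

Lemma dcoef2_SS p q : (p <= L)%N -> (q <= L)%N -> dcoef 2 (monom [:: S p; S q]) = 0.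
Proof.
move=> le_pL le_qL; rewrite dcoef_succ network_sum_zero // => i j hj.
have U_out : U_ (N i) j \notin [:: S p; S q] by rewrite !inE !(U_neq_nonint hj (S_nonint _)).
rewrite /step_contrib !contrib_single_out // !addr0 contrib_out //.
apply/negP => /mono_le_pair [enz_in S_in].
apply: (no_enz_with_sub (i := i0) (S_pred_in_subs hj)).
  by move: enz_in; rewrite !inE => /orP [] /eqP ->; apply: S_in_subs.
by move: S_in; rewrite !inE => /orP [] /eqP ->; apply: S_in_subs.
Qed.

(* [U_j U'] with [j < L] arises in the third derivative only from the two
   decompositions of [U_j], which release [Y + S_(j-1)] and [Y + S_j]. *)
Lemma dcoef3_US j : (1 <= j)%N -> (j < L)%N ->
  dcoef 3 (monom [:: U j; S L.-1]) = (b i0 j + c i0 j) * (a i0 L * c i0 L).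
Proof.
move=> hj1 lt_jL; have hj : (1 <= j <= L)%N by rewrite hj1 ltnW.
have lt_L1 : (L.-1 < L)%N by rewrite prednK ?ints_pos.
have le_j1 := ltnW (lt_pred_L hj).
rewrite dcoef_succ (network_sum_single (i1 := i0) (j1 := j)
  (v := (b i0 j + c i0 j) * (a i0 L * c i0 L))) // => i j' hj'.
rewrite /step_contrib contrib_out ?add0r; last first.
  by apply/negP => /(source_le_pair hj') [/(U_not_nonint hj)].
have [/andP [/eqP Ei /eqP Ej] | ne_ij] := boolP ((i == i0) && (j' == j)); last first.
  have U_out : U_ (N i) j' \notin [:: U j; S L.-1].
    by rewrite !inE U_eqE // (negbTE ne_ij) (U_neq_nonint hj' (S_nonint (ltnW lt_L1))).
  by rewrite !contrib_single_out ?addr0.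
subst i j'; rewrite !(contrib_monom _ _ (u := [:: S L.-1])) // !big_cons !big_nil /=.
rewrite (S_eq_enz (ltnW lt_L1)) dcoef2_YS_last (dcoef2_SS le_j1 (ltnW lt_L1)).
rewrite (dcoef2_SS (ltnW lt_jL) (ltnW lt_L1)).
rewrite (monom_perm (perm_swap2 (U j) (S L.-1))) (dcoef2_SU lt_L1 hj).
by rewrite !mulr0 !add0r !addr0 !subr0 mul1r; ring.
Qed.

(* [Y S_(j-1) S_(L-1)] with [j < L] arises in the third derivative only from
   the binding reaction [Y + S_(j-1) -> U_j]. *)
Lemma dcoef3_YSS j : (1 <= j)%N -> (j < L)%N ->
  dcoef 3 (monom [:: Y; S j.-1; S L.-1]) = - a i0 j * (a i0 L * c i0 L).
Proof.
move=> hj1 lt_jL; have hj : (1 <= j <= L)%N by rewrite hj1 ltnW.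
have lt_L1 : (L.-1 < L)%N by rewrite prednK ?ints_pos.
have lt_j1 := lt_pred_L hj.
have hL : (1 <= L <= L)%N by rewrite leqnn andbT ints_pos.
rewrite dcoef_succ (network_sum_single (i1 := i0) (j1 := j)
  (v := - a i0 j * (a i0 L * c i0 L))) // => i j' hj'.
have U_out : U_ (N i) j' \notin [:: Y; S j.-1; S L.-1].
  rewrite !inE (U_neq_nonint hj' (enz_nonint i0)).
  by rewrite (U_neq_nonint hj' (S_nonint (ltnW lt_j1))) (U_neq_nonint hj' (S_nonint (ltnW lt_L1))).
rewrite /step_contrib !contrib_single_out // !addr0.
have [le_src|not_le] := boolP (mono_le (monom [:: enz (N i); S_ (N i) j'.-1])
                                       (monom [:: Y; S j.-1; S L.-1])); last first.
  rewrite contrib_out //; case: andP => // [[/eqP Ei /eqP Ej]]; subst i j'.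
  case/negP: not_le; apply: (mono_le_cat (u := [:: S L.-1])); exact: perm_refl.
have le_ks : all (fun k => k <= L)%N [:: j.-1; L.-1] by rewrite /= (ltnW lt_j1) (ltnW lt_L1).
have [Ei] := source_in_comp hj' le_ks le_src; subst i.
rewrite !inE => /orP [] /eqP Ej'.
  have {}Ej' : j' = j by rewrite -(prednK hj1) -Ej' prednK //; case/andP: hj'.
  subst j'; rewrite !eqxx (contrib_monom _ _ (u := [:: S L.-1])) // !big_cons !big_nil /=.
  rewrite (S_eq_enz (ltnW lt_L1)) dcoef2_YS_last (dcoef2_SS (ltnW lt_j1) (ltnW lt_L1)).
  rewrite (monom_perm (perm_swap2 (U j) (S L.-1))) (dcoef2_SU lt_L1 hj) /=.
  by rewrite !mulr0 !addr0 !mul1r add0r mulrN mulNr.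
have {}Ej' : j' = L by rewrite -(prednK (ints_pos i0)) -Ej' prednK //; case/andP: hj'.
subst j'; rewrite eqxx /= (gtn_eqF lt_jL).
rewrite (contrib_monom _ _ (u := [:: S j.-1])); last by rewrite /= perm_cons perm_swap2.
rewrite !big_cons !big_nil /= (S_eq_enz (ltnW lt_j1)) (dcoef2_YS_inner hj1 lt_jL).
rewrite (dcoef2_SS (ltnW lt_L1) (ltnW lt_j1)).
rewrite (monom_perm (perm_swap2 (U L) (S j.-1))) (dcoef2_SU lt_j1 hL).
by rewrite !mulr0 !addr0 subrr mulr0.
Qed.

End Coefficients.

Section Identifiability.
Variables (R : realFieldType) (a1 b1 c1 a2 b2 c2 : 'I_K -> nat -> R).

Definition same_derivatives (D : nat) : Prop :=
  forall l : nat, (1 <= l <= D)%N -> forall m, dcoef a1 b1 c1 l m = dcoef a2 b2 c2 l m.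

Lemma same_derivatives_le D D' : (D' <= D)%N -> same_derivatives D -> same_derivatives D'.
Proof. by move=> le_D same l /andP [l_pos le_l]; apply: same; rewrite l_pos (leq_trans le_l). Qed.

Lemma last_step_identified : c1 i0 L != 0 -> same_derivatives 2 ->
  [/\ a1 i0 L = a2 i0 L, b1 i0 L = b2 i0 L & c1 i0 L = c2 i0 L].
Proof.
move=> nz_c same; have hL : (1 <= L <= L)%N by rewrite leqnn andbT ints_pos.
have Ec : c1 i0 L = c2 i0 L.
  by have := same 1%N isT (monom [:: U L]); rewrite !dcoef1_U // eqxx.
have Ea : a1 i0 L = a2 i0 L.
  by apply: (mulIf nz_c); have := same 2%N isT (monom [:: Y; S L.-1]); rewrite !dcoef2_YS_last Ec.
split=> //; have := same 2%N isT (monom [:: U L]); rewrite !dcoef2_U -Ec.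
by move/(mulIf nz_c)/oppr_inj/addIr.
Qed.

Lemma inner_steps_identified j : a1 i0 L * c1 i0 L != 0 ->
  a1 i0 L = a2 i0 L -> c1 i0 L = c2 i0 L -> same_derivatives 3 ->
  (1 <= j)%N -> (j < L)%N ->
  a1 i0 j = a2 i0 j /\ b1 i0 j + c1 i0 j = b2 i0 j + c2 i0 j.
Proof.
move=> nz_ac Ea Ec same hj1 lt_jL; split.
  have := same 3%N isT (monom [:: Y; S j.-1; S L.-1]).
  by rewrite !dcoef3_YSS // -Ea -Ec => /(mulIf nz_ac)/oppr_inj.
have := same 3%N isT (monom [:: U j; S L.-1]).
by rewrite !dcoef3_US // -Ea -Ec => /(mulIf nz_ac).
Qed.

End Identifiability.
End Network.

Theorem mainTheorem7 (R : realFieldType) (T : finType) (K : nat) (N : 'I_K -> ecomp T)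
    (part : T -> nat) (M : nat) (i0 : 'I_K)
    (a1 b1 c1 a2 b2 c2 : 'I_K -> nat -> R) :
  H1 N -> H2 N part M ->
  positive_rates N a1 b1 c1 -> positive_rates N a2 b2 c2 ->
  let L := size (ints (N i0)) in
  let sL := S_ (N i0) L in
  let F1 := net_field N a1 b1 c1 in
  let F2 := net_field N a2 b2 c2 in
  ((forall l : nat, (1 <= l <= 2)%N -> mpoly_eq (lie_iter F1 l sL) (lie_iter F2 l sL)) ->
     [/\ a1 i0 L = a2 i0 L, b1 i0 L = b2 i0 L & c1 i0 L = c2 i0 L]) /\
  ((1 < L)%N ->
   (forall l : nat, (1 <= l <= 3)%N -> mpoly_eq (lie_iter F1 l sL) (lie_iter F2 l sL)) ->
     forall j : nat, (1 <= j <= L - 1)%N ->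
       a1 i0 j = a2 i0 j /\ b1 i0 j + c1 i0 j = b2 i0 j + c2 i0 j).
Proof.
move=> h1 h2 pos1 _ L sL F1 F2.
have hL : (1 <= L <= L)%N by rewrite leqnn andbT (ints_pos h1).
have [a_pos [_ c_pos]] := pos1 i0 L hL.
split=> [same2 | lt_1L same3 j /andP [hj1 le_j]].
  exact: (last_step_identified h1 h2 (lt0r_neq0 c_pos) same2).
have same2 := same_derivatives_le (isT : (2 <= 3)%N) same3.
have [Ea _ Ec] := last_step_identified h1 h2 (lt0r_neq0 c_pos) same2.
have nz_ac : a1 i0 L * c1 i0 L != 0 by rewrite mulf_neq0 ?lt0r_neq0.
by apply: (inner_steps_identified h1 h2 nz_ac Ea Ec same3 hj1); move: lt_1L le_j; lia.
Qed.
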